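(* For every fixed positive integer $c$, and for every positive integer $k$ large enough compared to $c$, there exists a tournament $T$ on $2k+c$ vertices such that $\mathrm{sinv}'_k(T) > \frac{1}{2}\log(2k+c) - \log(2c)$. In particular, for every fixed positive integer $c$, $m'_k(2k+c)$ is unbounded as $k\to\infty$.
   Context: Logarithms are to base 2. A tournament is an orientation of a complete graph. For a digraph $D$ and $X \subseteq V(D)$, inverting $X$ means reversing the direction of every arc of $D$ with both endvertices in $X$. A digraph $D$ is $k$-arc-strong if for every partition $(V_1,V_2)$ of $V(D)$ into nonempty sets there are at least $k$ arcs from $V_1$ to $V_2$. $\mathrm{sinv}'_k(D)$ is the minimum number of sets whose successive inversion transforms $D$ into a $k$-arc-strong digraph. For $n\ge 2k+1$, $m'_k(n)=\max\{\mathrm{sinv}'_k(T): T \text{ tournament of order } n\}$. *)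

From mathcomp Require Import all_boot.
From Stdlib Require Import Reals.
Set Implicit Arguments. Unset Strict Implicit. Unset Printing Implicit Defensive.

Definition digraph (n : nat) := rel 'I_n.

Definition is_tournament n (D : digraph n) : Prop :=
  (forall x, ~~ D x x) /\
  (forall x y, x != y -> (D x y || D y x) /\ ~~ (D x y && D y x)).

Definition invert n (D : digraph n) (X : {set 'I_n}) : digraph n :=
  fun x y => if (x \in X) && (y \in X) then D y x else D x y.

Definition invert_seq n (D : digraph n) (Xs : seq {set 'I_n}) : digraph n :=
  foldl (@invert n) D Xs.

Definition arcs_out n (D : digraph n) (V1 : {set 'I_n}) : nat :=
  #|[set p : 'I_n * 'I_n | [&& p.1 \in V1, p.2 \notin V1 & D p.1 p.2]]|.

Definition arc_strong n (k : nat) (D : digraph n) : Prop :=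
  forall V1 : {set 'I_n}, V1 != set0 -> V1 != setT -> k <= arcs_out D V1.

Definition sinv_achievable n (k m : nat) (D : digraph n) : Prop :=
  exists Xs : seq {set 'I_n}, size Xs = m /\ arc_strong k (invert_seq D Xs).

(* sinv'_k(D) > x  (sinv' is the minimum such m; it is +infinity if none exists). *)
Definition sinv_gt n (k : nat) (D : digraph n) (x : R) : Prop :=
  forall m, sinv_achievable k m D -> (x < INR m)%R.

Definition log2 (x : R) : R := (ln x / ln 2)%R.

(* m'_k(n) = max over tournaments T of order n of sinv'_k(T);
   "m'_k(n) > B" means some tournament of order n has sinv'_k > B. *)
Definition mprime_gt (k n B : nat) : Prop :=
  exists T : digraph n, is_tournament T /\ sinv_gt k T (INR B).

(* Encode a tournament on 'I_n by one bit per ordered pair (only the pairs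
   x < y are read), giving 2^(n*n) codes.  Inverting a sequence of sets flips
   the bit of x < y iff an odd number of the sets contain both x and y, so the
   sequence acts on codes as an involution.  On n = 2k + c vertices a
   k-arc-strong tournament has all its out-degrees in the window [k, k + c);
   hence the codes that some M inversions make k-arc-strong number at most
   (2^n)^M times the near-regular codes.  Choosing the out-neighbours of vertex
   j among the N vertices above it, at most c * C(N, N/2) <= c 2^N / sqrt(N+1)
   of the 2^N choices put the out-degree of j in the window, so there are at
   most c^n 2^(n*n) / sqrt(n!) near-regular codes.  Since n! >= (n/3)^n, the
   condition 4^M * 4c^2 <= n, which is the logarithmic bound of the statement,
   leaves a code that no M inversions make k-arc-strong. *)

From mathcomp Require Import all_boot.
From Stdlib Require Import Reals.
(* Reals redefines the arithmetic notations of nat_scope. *)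
Import ssrnat.
From mathcomp Require Import zify ring.
From Stdlib Require Import Lra Field.
Set Implicit Arguments. Unset Strict Implicit. Unset Printing Implicit Defensive.

Lemma leq_bin_succ N s : s.*2 < N -> 'C(N, s) <= 'C(N, s.+1).
Proof.
move=> lt_sN; rewrite -(@leq_pmul2l s.+1) // mul_bin_left.
by rewrite leq_mul2r; apply/orP; right; lia.
Qed.

Lemma leq_bin_half N s : 'C(N, s) <= 'C(N, N./2).
Proof.
have halfN := odd_double_half N.
have below d s0 : s0 + d = N./2 -> 'C(N, s0) <= 'C(N, N./2).
  elim: d s0 => [|d IHd] s0 eq_s0; first by rewrite -eq_s0 addn0.
  by rewrite (leq_trans (leq_bin_succ _)) ?IHd; lia.
have [le_sN2|lt_N2s] := leqP s N./2; first by apply: (below (N./2 - s)); lia.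
have [le_sN|lt_Ns] := leqP s N; last by rewrite bin_small.
by rewrite -bin_sub //; apply: (below (N./2 - (N - s))); lia.
Qed.

Lemma mul_bin_center_odd a : a.+1 * 'C(a.*2.+1, a) = a.*2.+1 * 'C(a.*2, a).
Proof. by rewrite mul_bin_down; congr muln; lia. Qed.

Lemma bin_center_even_succ a : 'C(a.*2.+2, a.+1) = 'C(a.*2.+1, a).*2.
Proof.
apply/eqP; rewrite -(eqn_pmul2l (ltn0Sn a)) -mul_bin_diag /=.
by apply/eqP; rewrite -!muln2; ring.
Qed.

Lemma bin_center_even_bound a : 'C(a.*2, a) ^ 2 * a.*2.+1 <= 16 ^ a.
Proof.
elim: a => [//|a IHa]; rewrite doubleS bin_center_even_succ (expnS 16).
rewrite -(@leq_pmul2r (a.+1 ^ 2)) ?expn_gt0 //.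
have -> : 'C(a.*2.+1, a).*2 ^ 2 * a.*2.+3 * a.+1 ^ 2
        = 4 * (a.+1 * 'C(a.*2.+1, a)) ^ 2 * a.*2.+3.
  by rewrite -!muln2; ring.
rewrite mul_bin_center_odd.
have -> : 4 * (a.*2.+1 * 'C(a.*2, a)) ^ 2 * a.*2.+3
        = (4 * a.*2.+1 * a.*2.+3) * ('C(a.*2, a) ^ 2 * a.*2.+1) by ring.
rewrite [in leqRHS]mulnAC; apply: leq_mul _ IHa; rewrite -!muln2; nia.
Qed.

Lemma bin_center_bound N : 'C(N, N./2) ^ 2 * N.+1 <= 4 ^ N.
Proof.
have halfN := odd_double_half N; set a := N./2 in halfN *.
have pow4_double : 4 ^ a.*2 = 16 ^ a by rewrite -muln2 mulnC expnM.
have even_bound := bin_center_even_bound a.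
case: (odd N) halfN => /= <-; last by rewrite add0n pow4_double.
rewrite add1n -(@leq_pmul2r (a.+1 ^ 2)) ?expn_gt0 // (expnS 4) pow4_double.
have -> : 'C(a.*2.+1, a) ^ 2 * a.*2.+2 * a.+1 ^ 2
        = (a.+1 * 'C(a.*2.+1, a)) ^ 2 * a.*2.+2 by ring.
rewrite mul_bin_center_odd.
have -> : (a.*2.+1 * 'C(a.*2, a)) ^ 2 * a.*2.+2
        = (a.*2.+1 * a.*2.+2) * ('C(a.*2, a) ^ 2 * a.*2.+1) by ring.
rewrite [in leqRHS]mulnAC; apply: leq_mul _ even_bound; rewrite -!muln2; nia.
Qed.

Lemma card_bigcup_le (I T : finType) (P : pred I) (F : I -> {set T}) :
  #|\bigcup_(i | P i) F i| <= \sum_(i | P i) #|F i|.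
Proof.
elim/big_rec2: _ => [|i m A _ leAm]; first by rewrite cards0.
exact: leq_trans (leq_card_setU _ _).1 (leq_add (leqnn _) leAm).
Qed.

Lemma card_subsets_in_window (T : finType) (A : {set T}) k c e :
  #|[set r : {set T} | (r \subset A) && (k <= #|r| + e < k + c)]|
    <= c * 'C(#|A|, #|A|./2).
Proof.
set lo := k - e.
apply: (@leq_trans #|\bigcup_(i < c) [set r : {set T} | r \subset A & #|r| == lo + i]|).
  apply/subset_leq_card/subsetP => r; rewrite inE => /andP[sub_rA win].
  have lt_i : #|r| - lo < c by lia.
  apply/bigcupP; exists (Ordinal lt_i) => //; rewrite inE sub_rA /=; apply/eqP; lia.
apply: leq_trans (card_bigcup_le _ _) _.
rewrite -[c in c * _]card_ord -sum_nat_const; apply: leq_sum => i _.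
by rewrite cards_draws leq_bin_half.
Qed.

Lemma card_ord_gt m j : #|[set y : 'I_m | j < y]| = m - j.+1.
Proof. by rewrite -sum1dep_card -[RHS]muln1 -sum_nat_const_nat big_geq_mkord. Qed.

Lemma setD_subset_self (T : finType) (A B : {set T}) :
  (B :\: A \subset A) = (B \subset A).
Proof.
apply/subsetP/subsetP => sub x; last by rewrite inE => /andP[/negP nAx /sub].
by move=> Bx; apply: contraT => nAx; rewrite -(negbTE nAx) sub // inE nAx.
Qed.

Section Digraphs.
Variable n : nat.
Implicit Types (D : digraph n) (Xs : seq {set 'I_n}) (x y : 'I_n).

Definition reversed Xs x y : bool :=
  odd (count (fun X : {set 'I_n} => (x \in X) && (y \in X)) Xs).

Lemma reversedC Xs x y : reversed Xs x y = reversed Xs y x.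
Proof. by rewrite /reversed; congr odd; apply: eq_count => X; rewrite andbC. Qed.

Lemma reversed_cat_nseq0 Xs j x y : reversed (Xs ++ nseq j set0) x y = reversed Xs x y.
Proof. by rewrite /reversed count_cat count_nseq !inE mul0n addn0. Qed.

Lemma invert_seqE D Xs x y :
  invert_seq D Xs x y = if reversed Xs x y then D y x else D x y.
Proof.
elim: Xs D => [//|X Xs IHXs] D; rewrite /invert_seq /= -/(invert_seq _ _) IHXs.
rewrite /invert /reversed /=.
by case: (x \in X); case: (y \in X); rewrite /= ?add0n //; case: (odd _).
Qed.

Lemma eq_arc_strong k D D' : D =2 D' -> arc_strong k D -> arc_strong k D'.
Proof.
move=> eqD strongD V1 V1_n0 V1_nT; rewrite /arcs_out.
by under eq_finset => p do rewrite -eqD; exact: strongD.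
Qed.

Definition outdeg D x := #|[set y | D x y]|.
Definition indeg D x := #|[set y | D y x]|.

Lemma arcs_out_set1 D x : ~~ D x x -> arcs_out D [set x] = outdeg D x.
Proof.
move=> Dxx; rewrite /arcs_out -[outdeg D x]mul1n -(cards1 x) -cardsX.
apply: eq_card => -[a b]; rewrite !inE /=.
by case: eqP => [->|] //=; case: (b =P x) => [->|]; rewrite ?(negbTE Dxx).
Qed.

Lemma arcs_out_setC1 D x : ~~ D x x -> arcs_out D (~: [set x]) = indeg D x.
Proof.
move=> Dxx; rewrite /arcs_out -[indeg D x]muln1 -(cards1 x) -cardsX.
apply: eq_card => -[a b]; rewrite !inE /= negbK.
by case: (b =P x) => [->|]; rewrite ?andbF // andbT;
  case: (a =P x) => [->|]; rewrite ?(negbTE Dxx).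
Qed.

Lemma arc_strong_deg k D x : 1 < n -> ~~ D x x -> arc_strong k D ->
  k <= outdeg D x /\ k <= indeg D x.
Proof.
move=> n_gt1 Dxx strongD.
have proper_part (A : {set 'I_n}) : 0 < #|A| < n -> A != set0 /\ A != setT.
  by case/andP=> A_gt0 A_ltn; split; apply/eqP => eqA;
    move: A_gt0 A_ltn; rewrite eqA ?cards0 ?cardsT ?card_ord ?ltnn.
have [x_n0 x_nT] : [set x] != set0 /\ [set x] != setT.
  by apply: proper_part; rewrite cards1.
have [Cx_n0 Cx_nT] : ~: [set x] != set0 /\ ~: [set x] != setT.
  by apply: proper_part; rewrite cardsC1 card_ord; lia.
by rewrite -arcs_out_set1 -?arcs_out_setC1 //; split; apply: strongD.
Qed.

Lemma tournament_indeg_outdeg D x : is_tournament D -> indeg D x + outdeg D x = n.-1.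
Proof.
case=> loopless total; rewrite -(card_ord n) -(cardsC1 x) /indeg /outdeg -cardsUI.
have -> : [set y | D y x] :&: [set y | D x y] = set0.
  apply/setP => y; rewrite !inE; case: (y =P x) => [->|/eqP y_x].
    by rewrite (negbTE (loopless x)).
  by apply/negbTE; case: (total _ _ y_x); rewrite andbC.
rewrite cards0 addn0; apply: eq_card => y; rewrite !inE.
case: (y =P x) => [->|/eqP y_x]; first by rewrite (negbTE (loopless x)).
by case: (total _ _ y_x).
Qed.

Lemma arc_strong_outdeg_window k c D x : n = 2 * k + c -> 0 < k ->
  is_tournament D -> arc_strong k D -> k <= outdeg D x < k + c.
Proof.
move=> def_n k_gt0 tourD strongD; have [loopless _] := tourD.
have n_gt1 : 1 < n by lia.
have [out_ge in_ge] := arc_strong_deg n_gt1 (loopless x) strongD.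
by rewrite out_ge /=; have := tournament_indeg_outdeg x tourD; lia.
Qed.

End Digraphs.

Section TournamentCodes.
Variable n : nat.

(* The bits of the pairs (x, y) with y <= x are never read: they multiply
   every count below by the same factor. *)
Definition code := {ffun 'I_n * 'I_n -> bool}.
Implicit Types (t : code) (j x y : 'I_n) (r : {set 'I_n}).

Definition tour t : digraph n :=
  fun x y => if x < y then t (x, y) else if y < x then ~~ t (y, x) else false.

Lemma tour_tournament t : is_tournament (tour t).
Proof.
split=> [x|x y /negbTE x_y]; first by rewrite /tour ltnn.
rewrite /tour; case: ltngtP => [||/val_inj/eqP]; last by rewrite x_y.
all: by case: (t _).
Qed.

Lemma card_code : #|{: code}| = 2 ^ (n * n).
Proof. by rewrite card_ffun card_prod card_ord card_bool. Qed.

Definition flip t (Xs : seq {set 'I_n}) : code :=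
  [ffun p => t p (+) reversed Xs p.1 p.2].

Lemma flipK Xs : involutive (flip ^~ Xs).
Proof. by move=> t; apply/ffunP => p; rewrite !ffunE addbK. Qed.

Lemma invert_seq_tour t Xs : invert_seq (tour t) Xs =2 tour (flip t Xs).
Proof.
move=> x y; rewrite invert_seqE /tour !ffunE /=.
case: ltngtP => _; last by case: (reversed _ _ _).
  by rewrite reversedC; case: (reversed _ _ _); case: (t _).
by case: (reversed _ _ _); case: (t _).
Qed.

Definition above j : {set 'I_n} := [set y : 'I_n | j < y].
Definition out_above t j : {set 'I_n} := [set y : 'I_n | (j < y) && t (j, y)].
Definition out_below t j : {set 'I_n} := [set y : 'I_n | (y < j) && ~~ t (y, j)].

Lemma outdeg_tour t j : outdeg (tour t) j = #|out_above t j| + #|out_below t j|.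
Proof.
rewrite -cardsUI; have -> : out_above t j :&: out_below t j = set0.
  by apply/setP => y; rewrite !inE; case: (ltngtP j y); rewrite ?andbF.
rewrite cards0 addn0; apply: eq_card => y; rewrite !inE /tour.
by case: (ltngtP j y); rewrite /= ?orbF.
Qed.

Definition set_row t j r : code :=
  [ffun p : 'I_n * 'I_n => if (p.1 == j) && (j < p.2) then p.2 \in r else t p].

Lemma tour_set_row_lt t j r x y : x < j -> tour (set_row t j r) x y = tour t x y.
Proof.
move=> lt_xj; rewrite /tour !ffunE /= (ltn_eqF lt_xj : (x == j) = false).
case: ltngtP => //= lt_yx.
by rewrite (ltn_eqF (ltn_trans lt_yx lt_xj) : (y == j) = false).
Qed.

Lemma out_above_set_row t j r : r \subset above j -> out_above (set_row t j r) j = r.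
Proof.
move=> /subsetP sub_r; apply/setP => y; rewrite !inE ffunE /= eqxx.
by case: ltnP => //= le_yj; apply/esym/negP => /sub_r; rewrite inE ltnNge le_yj.
Qed.

Lemma out_below_set_row t j r : out_below (set_row t j r) j = out_below t j.
Proof.
apply/setP => y; rewrite !inE ffunE /=.
by case: ltnP => //= lt_yj; rewrite (ltn_eqF lt_yj : (y == j) = false).
Qed.

Definition swap_row j (p : code * {set 'I_n}) :=
  (set_row p.1 j p.2, out_above p.1 j :|: (p.2 :\: above j)).

Lemma swap_rowK j : involutive (swap_row j).
Proof.
case=> t r; rewrite /swap_row /=; congr pair.
  apply/ffunP => -[a b]; rewrite !ffunE /=.
  by case: eqP => [->|] //=; case: ltnP => //= lt_jb; rewrite !inE lt_jb orbF.
apply/setP => y; rewrite !inE ffunE /= eqxx.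
by case: ltnP => /=; rewrite ?andbF ?orbF ?andbT.
Qed.

Variables k c : nat.

Definition near_regular (j : nat) : {set code} :=
  [set t | [forall x : 'I_n, (x < j) ==> (k <= outdeg (tour t) x < k + c)]].

Lemma near_regular0 : near_regular 0 = setT.
Proof. by apply/setP => t; rewrite !inE; apply/forallP. Qed.

Lemma near_regularS j t : (t \in near_regular j.+1) =
  (t \in near_regular j) && (k <= outdeg (tour t) j < k + c).
Proof.
rewrite !inE; apply/forallP/andP => [reg|[/forallP reg reg_j] x].
  split; last by have := reg j; rewrite ltnSn.
  by apply/forallP => x; apply/implyP => lt_xj; have := reg x; rewrite ltnS ltnW.
by rewrite ltnS leq_eqVlt; case: eqP => [/val_inj -> //|_]; exact: reg.
Qed.

Lemma near_regular_set_row j t r :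
  (set_row t j r \in near_regular j) = (t \in near_regular j).
Proof.
rewrite !inE; apply: eq_forallb => x; case: ltnP => //= lt_xj.
by rewrite /outdeg; under eq_finset => y do rewrite tour_set_row_lt //.
Qed.

(* Double counting through the involution swap_row: a code near-regular up to
   j.+1 paired with any upper row of j is sent to a code near-regular up to j
   paired with an upper row whose size keeps the out-degree of j in the window. *)
Lemma card_near_regularS j :
  2 ^ (n - j.+1) * #|near_regular j.+1|
    <= c * 'C(n - j.+1, (n - j.+1)./2) * #|near_regular j|.
Proof.
rewrite -(card_ord_gt n j) -/(above j) -card_powerset mulnC -cardsX.
rewrite -(card_preimset _ (inv_inj (swap_rowK j))).
pose W t := [set r : {set 'I_n} |
  (r \subset above j) && (k <= #|r| + #|out_below t j| < k + c)].
apply: (@leq_trans #|\bigcup_(t in near_regular j) setX [set t] (W t)|).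
  apply/subset_leq_card/subsetP => -[t r]; rewrite inE in_setX /= powersetE.
  rewrite subUset setD_subset_self near_regularS.
  move=> /andP[/andP[reg_t win] /andP[_ sub_r]].
  apply/bigcupP; exists t; first by rewrite -(near_regular_set_row j t r).
  rewrite !inE eqxx sub_r /=.
  by rewrite outdeg_tour out_above_set_row // out_below_set_row in win.
apply: leq_trans (card_bigcup_le _ _) _.
rewrite mulnC -sum_nat_const; apply: leq_sum => t _.
by rewrite cardsX cards1 mul1n card_subsets_in_window.
Qed.

Lemma card_near_regularS_sq j :
  #|near_regular j.+1| ^ 2 * (n - j) <= c ^ 2 * #|near_regular j| ^ 2.
Proof.
have step := card_near_regularS j; set N := n - j.+1 in step.
have -> : n - j = N.+1 by rewrite /N; have := ltn_ord j; lia.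
set q' := #|_| in step *; set q := #|_| in step *; set B := 'C(_, _) in step.
rewrite -(@leq_pmul2l (4 ^ N)) ?expn_gt0 //.
have -> : 4 ^ N * (q' ^ 2 * N.+1) = (2 ^ N * q') ^ 2 * N.+1.
  by rewrite -[4]/(2 * 2) expnMn; ring.
apply: (@leq_trans ((c * B * q) ^ 2 * N.+1)).
  by rewrite leq_mul2r leq_exp2r // step orbT.
have -> : (c * B * q) ^ 2 * N.+1 = (B ^ 2 * N.+1) * (c ^ 2 * q ^ 2) by ring.
by rewrite leq_mul2r bin_center_bound orbT.
Qed.

Lemma card_near_regular_ffact (j : nat) : j <= n ->
  #|near_regular j| ^ 2 * n ^_ j <= c ^ (2 * j) * (2 ^ (n * n)) ^ 2.
Proof.
elim: j => [_|j IHj lt_jn].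
  by rewrite near_regular0 cardsT card_code ffactn0 muln0 expn0 mul1n muln1.
have := card_near_regularS_sq (Ordinal lt_jn) => /= step.
apply: (@leq_trans (c ^ 2 * (#|near_regular j| ^ 2 * n ^_ j))).
  by rewrite ffactnSr mulnA mulnAC [in leqRHS]mulnA leq_mul2r step orbT.
by rewrite mulnS expnD -mulnA leq_mul2l IHj ?orbT // ltnW.
Qed.

Lemma card_sets : #|{: {set 'I_n}}| = 2 ^ n.
Proof. by rewrite -cardsT -powersetT card_powerset cardsT card_ord. Qed.

Definition fixable (M : nat) : {set code} :=
  \bigcup_(Xs : M.-tuple {set 'I_n}) (fun t : code => flip t Xs) @^-1: near_regular n.

Lemma card_fixable M : #|fixable M| <= 2 ^ (n * M) * #|near_regular n|.
Proof.
apply: leq_trans (card_bigcup_le _ _) _.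
under eq_bigr => Xs _ do rewrite (card_preimset _ (inv_inj (flipK Xs))).
by rewrite sum_nat_const card_tuple card_sets expnM.
Qed.

End TournamentCodes.

Section RealBounds.
Local Open Scope R_scope.

Lemma INR_expn m e : INR (m ^ e)%N = INR m ^ e.
Proof. by elim: e => [//|e IHe]; rewrite expnS mult_INR IHe. Qed.

Lemma INR_succ_pow_le (m : nat) : (0 < m)%N -> (INR m + 1) ^ m <= 3 * INR m ^ m.
Proof.
move=> m_gt0; have m_pos : 0 < INR m by apply/lt_0_INR/ltP.
have exp_pow : exp (/ INR m) ^ m = exp 1.
  have e_pos := exp_pos (/ INR m).
  by rewrite -[LHS]exp_ln ?ln_pow ?ln_exp ?Rinv_r //; try apply: pow_lt; lra.
have -> : INR m + 1 = INR m * (1 + / INR m).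
  by rewrite Rmult_plus_distr_l Rmult_1_r Rinv_r //; lra.
rewrite Rpow_mult_distr Rmult_comm; apply: Rmult_le_compat_r; first by apply: pow_le; lra.
apply: Rle_trans exp_le_3; rewrite -exp_pow.
apply: pow_incr; split; last exact: exp_ineq1_le.
by have := Rinv_0_lt_compat _ m_pos; lra.
Qed.

Lemma ln_le_iff x y : 0 < x -> 0 < y -> ln x <= ln y <-> x <= y.
Proof.
move=> x_pos y_pos; split=> le_xy.
  by apply: Rnot_lt_le => /(ln_increasing _ _ y_pos); lra.
by case: (Rle_lt_or_eq_dec _ _ le_xy) => [/(ln_increasing _ _ x_pos)|->]; lra.
Qed.

Lemma ln_pow4_mul (m c : nat) : (0 < c)%N ->
  ln (INR (4 ^ m * (4 * c ^ 2))) = 2 * INR m * ln 2 + 2 * ln (INR (2 * c)).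
Proof.
move=> c_gt0; have c_pos : 0 < INR (2 * c) by apply/lt_0_INR/ltP; rewrite muln_gt0.
have -> : (4 ^ m * (4 * c ^ 2) = 2 ^ (2 * m) * (2 * c) ^ 2)%N.
  by rewrite expnM expnMn.
have INR2 : INR 2 = 2 by rewrite /=; lra.
have two_pos : 0 < INR 2 by lra.
rewrite mult_INR !INR_expn ln_mult ?ln_pow // ?(mult_INR 2 m) ?INR2; try exact: pow_lt.
lra.
Qed.

Lemma log_bound_iff (m c N : nat) : (0 < c)%N -> (0 < N)%N ->
  INR m <= / 2 * log2 (INR N) - log2 (INR (2 * c)) <-> (4 ^ m * (4 * c ^ 2) <= N)%N.
Proof.
move=> c_gt0 N_gt0; have ln2_pos : 0 < ln 2 by rewrite -ln_1; apply: ln_increasing; lra.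
have V_pos : 0 < INR (4 ^ m * (4 * c ^ 2)).
  by apply/lt_0_INR/ltP; rewrite muln_gt0 expn_gt0 /= muln_gt0 expn_gt0 c_gt0.
have N_pos : 0 < INR N by apply/lt_0_INR/ltP.
set V := (4 ^ m * (4 * c ^ 2))%N in V_pos *; set B := _ - log2 _.
have ln_le : ln (INR V) <= ln (INR N) <-> (V <= N)%N.
  rewrite ln_le_iff //; split=> [/INR_le/leP //|/leP/le_INR //].
have key : ln (INR N) - ln (INR V) = (B - INR m) * (2 * ln 2).
  by rewrite /B ln_pow4_mul // /log2; field; lra.
rewrite -ln_le; split=> le_mB.
  by have := Rmult_le_pos (B - INR m) (2 * ln 2); lra.
have := Rle_mult_inv_pos (ln (INR N) - ln (INR V)) (2 * ln 2).
rewrite key Rmult_assoc Rinv_r; lra.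
Qed.

End RealBounds.

Lemma succ_pow_le m : m.+1 ^ m <= 3 * m ^ m.
Proof.
case: m => [//|m]; apply/leP/INR_le.
rewrite mult_INR !INR_expn S_INR (_ : INR 3 = 3%R); last by rewrite /=; lra.
exact: INR_succ_pow_le.
Qed.

Lemma pow_le_fact m : m ^ m <= 3 ^ m * m`!.
Proof.
elim: m => [//|m IHm]; apply: (@leq_trans (m.+1 * (3 * (3 ^ m * m`!)))).
  by rewrite expnS leq_mul2l (leq_trans (succ_pow_le m)) ?leq_mul2l ?IHm ?orbT.
by rewrite factS expnS; apply: eq_leq; ring.
Qed.

Lemma exists_unfixable n k c M : 0 < n -> 4 ^ M * (4 * c ^ 2) <= n ->
  exists t : code n, t \notin fixable n k c M.
Proof.
move=> n_gt0 le_Mn.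
set A := 2 ^ (n * M); set q := #|near_regular n k c n|; set Z := 2 ^ (n * n).
have card_reg : q ^ 2 * n`! <= c ^ (2 * n) * Z ^ 2.
  by rewrite -ffactnn card_near_regular_ffact.
have pow_eq : A ^ 2 * 4 ^ n * c ^ (2 * n) = (4 ^ M * (4 * c ^ 2)) ^ n.
  rewrite /A -[4]/(2 ^ 2) !expnMn -!expnM -!expnD mulnA -expnD.
  by congr (2 ^ _ * c ^ _); lia.
have sq_bound : (A * q) ^ 2 * 4 ^ n <= 3 ^ n * Z ^ 2.
  rewrite -(@leq_pmul2r n`!) ?fact_gt0 //.
  apply: (@leq_trans ((A ^ 2 * 4 ^ n) * (c ^ (2 * n) * Z ^ 2))).
    have -> : (A * q) ^ 2 * 4 ^ n * n`! = (A ^ 2 * 4 ^ n) * (q ^ 2 * n`!) by ring.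
    by rewrite leq_mul2l card_reg orbT.
  rewrite mulnA pow_eq; apply: (@leq_trans (n ^ n * Z ^ 2)).
    by rewrite leq_mul2r leq_exp2r // le_Mn orbT.
  by rewrite mulnAC leq_mul2r pow_le_fact orbT.
have lt_AqZ : A * q < Z.
  rewrite -(@ltn_exp2r _ _ 2) // -(@ltn_pmul2r (4 ^ n)) ?expn_gt0 //.
  apply: leq_ltn_trans sq_bound _.
  by rewrite mulnC ltn_pmul2l ?expn_gt0 // ltn_exp2r.
have : ~~ ([set: code n] \subset fixable n k c M).
  apply/negP => /subset_leq_card; rewrite cardsT card_code leqNgt.
  by rewrite (leq_ltn_trans (card_fixable _ _ _ _) lt_AqZ).
by case/subsetPn => t _ t_nfix; exists t.
Qed.

Lemma fixable_of_arc_strong n k c M (t : code n) (Xs : seq {set 'I_n}) :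
  n = 2 * k + c -> 0 < k -> size Xs <= M ->
  arc_strong k (invert_seq (tour t) Xs) -> t \in fixable n k c M.
Proof.
move=> def_n k_gt0 le_XsM strong.
pose Ys := Xs ++ nseq (M - size Xs) set0.
have size_Ys : size Ys == M by rewrite size_cat size_nseq subnKC.
apply/bigcupP; exists (Tuple size_Ys) => //; rewrite !inE.
apply/forallP => x; apply/implyP => _.
apply: (arc_strong_outdeg_window x def_n k_gt0 (tour_tournament _)).
apply: eq_arc_strong strong => y z.
by rewrite -(invert_seq_tour t Ys) !invert_seqE reversed_cat_nseq0.
Qed.

Lemma exists_tournament_sinv_gt c k : 0 < c -> 0 < k -> 2 * c ^ 2 <= k ->
  exists T : digraph (2 * k + c), is_tournament T /\
    sinv_gt k T (/ 2 * log2 (INR (2 * k + c)) - log2 (INR (2 * c)))%R.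
Proof.
move=> c_gt0 k_gt0 le_ck; set n := 2 * k + c.
have n_gt0 : 0 < n by rewrite /n; lia.
have c4_gt0 : 0 < 4 * c ^ 2 by rewrite muln_gt0 expn_gt0 c_gt0.
pose M := trunc_log 4 (n %/ (4 * c ^ 2)).
have le_Mn : 4 ^ M * (4 * c ^ 2) <= n.
  by rewrite -leq_divRL // trunc_logP // divn_gt0 // /n; lia.
have [t t_nfix] := exists_unfixable k n_gt0 le_Mn.
exists (tour t); split=> [|m [Xs [size_Xs strong]]]; first exact: tour_tournament.
apply: Rnot_le_lt => /(log_bound_iff m c_gt0 n_gt0) le_mn.
have le_mM : m <= M by apply: trunc_log_max; rewrite // leq_divRL.
by case/negP: t_nfix; apply: fixable_of_arc_strong strong; rewrite ?size_Xs.
Qed.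

Theorem theorem5p7 :
  forall c : nat, 0 < c ->
    (exists K : nat, forall k : nat, 0 < k -> K <= k ->
       exists T : digraph (2 * k + c),
         is_tournament T /\
         sinv_gt k T (/ 2 * log2 (INR (2 * k + c)) - log2 (INR (2 * c)))%R)
    /\
    (forall B : nat, exists k : nat, 0 < k /\ mprime_gt k (2 * k + c) B).
Proof.
move=> c c_gt0; split=> [|B].
  by exists (2 * c ^ 2) => k; exact: exists_tournament_sinv_gt.
pose k := 2 * c ^ 2 * 4 ^ B.
have k_gt0 : 0 < k by rewrite !muln_gt0 !expn_gt0 c_gt0.
have le_ck : 2 * c ^ 2 <= k by rewrite leq_pmulr ?expn_gt0.
have [T [tourT sinvT]] := exists_tournament_sinv_gt c_gt0 k_gt0 le_ck.
exists k; split=> //; exists T; split=> // m /sinvT; apply: Rle_lt_trans.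
have n_gt0 : 0 < 2 * k + c by lia.
apply/(log_bound_iff B c_gt0 n_gt0).
have -> : 4 ^ B * (4 * c ^ 2) = 2 * k by rewrite /k; ring.
exact: leq_addr.
Qed.
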